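(* Let $\Gamma$ be a population network game, $\beta>0$, $\lambda\ge0$, and let $\sigma^2_{js}\ge0$ ($j\in V$, $s\in S_j$) be given. Consider the mean belief dynamics of an initially heterogeneous system, $$\frac{d\bar{\mu}_{is}}{dt}=\frac{f_{i,s}(\bar{\boldsymbol{\mu}})-\bar{\mu}_{is}}{\lambda+t+1}+\frac{\sum_{j\in V_i}\sum_{s'\in S_j}\frac{\partial^2 f_{i,s}}{\partial\mu_{js'}^2}(\bar{\boldsymbol{\mu}})\,\mathrm{Var}(\mu_{js'})(t)}{2(\lambda+t+1)},\qquad \mathrm{Var}(\mu_{js'})(t)=\Big(\tfrac{\lambda+1}{\lambda+t+1}\Big)^2\sigma^2_{js'},$$ for $i\in V$, $s\in S_i$. After the time reparametrization $\tau=\ln\frac{\lambda+t+1}{\lambda+1}$, this system is asymptotically autonomous with limit equation $$\frac{d\bar{\boldsymbol{\mu}}_i}{d\tau}=f_i(\{\bar{\boldsymbol{\mu}}_j\}_{j\in V_i})-\bar{\boldsymbol{\mu}}_i,\qquad i\in V,$$ i.e. its right-hand side $F(\tau,\bar{\boldsymbol{\mu}})$ converges, as $\tau\to\infty$, to $f(\bar{\boldsymbol{\mu}})-\bar{\boldsymbol{\mu}}$ uniformly on compact sets; and this limit equation is equivalent, via the same time reparametrization, to the belief dynamics of homogeneous systems $\frac{d\mu_{is}}{dt}=\frac{f_{i,s}(\{\boldsymbol{\mu}_j\}_{j\in V_i})-\mu_{is}}{\lambda+t+1}$.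
   Context: A population network game $\Gamma$ consists of a finite undirected graph with vertex set $V=\{1,\dots,n\}$ (populations) and edge set $E$; $V_i=\{j:\{i,j\}\in E\}$. Population $i$ has finite strategy set $S_i$, $\Delta_i\subset\mathbb{R}^{|S_i|}$ is the probability simplex, and each edge $\{i,j\}$ carries payoff matrices $\mathbf{A}_{ij}\in\mathbb{R}^{|S_i|\times|S_j|}$, $\mathbf{A}_{ji}\in\mathbb{R}^{|S_j|\times|S_i|}$. The logit choice function is $f_{i,s}(\{\boldsymbol{\mu}_j\}_{j\in V_i})=\exp\big(\beta\sum_{j\in V_i}\mathbf{e}_s^\top\mathbf{A}_{ij}\boldsymbol{\mu}_j\big)/\sum_{s'\in S_i}\exp\big(\beta\sum_{j\in V_i}\mathbf{e}_{s'}^\top\mathbf{A}_{ij}\boldsymbol{\mu}_j\big)$ ($\mathbf{e}_s$ the $s$-th unit vector), regarded as a smooth function of $(\boldsymbol{\mu}_j)_{j\in V_i}\in\prod_{j\in V_i}\mathbb{R}^{|S_j|}$; $f_{i,s}(\bar{\boldsymbol{\mu}})$ means $f_{i,s}(\{\bar{\boldsymbol{\mu}}_j\}_{j\in V_i})$. In a heterogeneous system, $\bar{\boldsymbol{\mu}}_j$ is the mean of the beliefs about population $j$ held across the system and $\sigma^2_{js}$ is the initial variance of the belief component $\mu_{js}$; the displayed variance formula is how this variance evolves. A nonautonomous system $x'=F(t,x)$ is asymptotically autonomous with limit equation $y'=g(y)$ if $F(t,x)\to g(x)$ as $t\to\infty$ uniformly on each compact set. *)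

From mathcomp Require Import all_boot all_order all_algebra.
From mathcomp Require Import all_classical all_reals all_analysis.
Export ArrowAsUniformType.
Import Order.TTheory GRing.Theory Num.Theory.


Local Open Scope ring_scope.
Local Open Scope classical_set_scope.

(* A population network game on V = 'I_n:
   - adj : rel 'I_n is the (symmetric, irreflexive) edge relation, V_i = [pred j | adj i j];
   - population i has strategy set S_i = 'I_(m i);
   - A i j : 'M[R]_(m i, m j) is the payoff matrix A_ij (only used when adj i j).
   The state space prod_i R^{|S_i|} is represented as functions on the finite
   index type  pcoord m = {i : 'I_n & 'I_(m i)}  (pairs (i,s) with s in S_i),
   i.e. x (existT _ i s) = x_{is}.  It carries the canonical (sup-norm) uniform
   topology of functions on a finite type, i.e. the usual topology of R^N. *)

Definition pcoord {n : nat} (m : 'I_n -> nat) : finType := {i : 'I_n & 'I_(m i)}.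

Definition pstate (R : realType) {n : nat} (m : 'I_n -> nat) := pcoord m -> R^o.

Definition ck {n : nat} {m : 'I_n -> nat} (i : 'I_n) (s : 'I_(m i)) : pcoord m :=
  existT (fun i => 'I_(m i)) i s.

Section Game.
Context {R : realType} {n : nat} {m : 'I_n -> nat}.
Variables (adj : rel 'I_n) (A : forall i j : 'I_n, 'M[R]_(m i, m j)) (beta : R).

Definition payoff_ij (x : pstate R m) (i j : 'I_n) (s : 'I_(m i)) : R :=
  \sum_(s' < m j) A i j s s' * x (ck j s').

Definition util (x : pstate R m) (i : 'I_n) (s : 'I_(m i)) : R :=
  beta * \sum_(j < n | adj i j) payoff_ij x i j s.

Definition logit (x : pstate R m) (i : 'I_n) (s : 'I_(m i)) : R :=
  expR (util x i s) / \sum_(s' < m i) expR (util x i s').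

Definition upd (x : pstate R m) (k : pcoord m) (y : R) : pstate R m :=
  fun k' => if k' == k then y else x k'.

Definition d2logit (x : pstate R m) (i : 'I_n) (s : 'I_(m i)) (k : pcoord m) : R :=
  derive1n 2 (fun y => logit (upd x k y) i s) (x k).

End Game.

Section Dynamics.
Context {R : realType} {n : nat} {m : 'I_n -> nat}.
Variables (adj : rel 'I_n) (A : forall i j : 'I_n, 'M[R]_(m i, m j)).
Variables (beta lambda : R) (sigma2 : pcoord m -> R).

Definition variance (t : R) (k : pcoord m) : R :=
  ((lambda + 1) / (lambda + t + 1)) ^+ 2 * sigma2 k.

Definition het_rhs (t : R) (x : pstate R m) : pstate R m :=
  fun k => let: existT i s := k in
    (logit adj A beta x i s - x k) / (lambda + t + 1)
    + (\sum_(j < n | adj i j) \sum_(s' < m j)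
         d2logit adj A beta x i s (ck j s') * variance t (ck j s'))
      / (2 * (lambda + t + 1)).

Definition hom_rhs (t : R) (x : pstate R m) : pstate R m :=
  fun k => let: existT i s := k in
    (logit adj A beta x i s - x k) / (lambda + t + 1).

Definition tau_of_t (t : R) : R := ln ((lambda + t + 1) / (lambda + 1)).
Definition t_of_tau (tau : R) : R := (lambda + 1) * expR tau - lambda - 1.

(* right-hand side of the heterogeneous system after the reparametrization:
   d mu/d tau = (dt/d tau) * (d mu/dt) with dt/d tau = (lambda+1) e^tau *)
Definition het_rhs_tau (tau : R) (x : pstate R m) : pstate R m :=
  fun k => (lambda + 1) * expR tau * het_rhs (t_of_tau tau) x k.

Definition limit_rhs (x : pstate R m) : pstate R m :=
  fun k => let: existT i s := k in logit adj A beta x i s - x k.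

End Dynamics.

Definition asymptotically_autonomous {R : realType} {T : finType}
    (F : R -> (T -> R^o) -> (T -> R^o)) (g : (T -> R^o) -> (T -> R^o)) : Prop :=
  forall C : set (T -> R^o), compact C ->
    forall e : R, 0 < e -> exists t0 : R, forall t : R, t0 < t ->
      forall x, C x -> forall k : T, `|F t x k - g x k| < e.

Definition solves_on {R : realType} {T : finType}
    (F : R -> (T -> R^o) -> (T -> R^o)) (D : set R) (u : R -> T -> R^o) : Prop :=
  forall t, D t -> forall k : T,
    derivable (fun r => u r k) t 1 /\ derive1 (fun r => u r k) t = F t (u t) k.

From Pilot Require Import Defs.
From mathcomp Require Import all_boot all_order all_algebra.
From mathcomp Require Import all_classical all_reals all_analysis.
From mathcomp Require Import ring lra.
Import Order.TTheory GRing.Theory Num.Theory.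
Import numFieldNormedType.Exports.
Local Open Scope ring_scope.
Local Open Scope classical_set_scope.

(* In the time tau, the heterogeneous right-hand side differs from f(mu) - mu
   by e^(-2 tau)/2 times a sigma^2-weighted sum of second derivatives of the
   logit map along single coordinates.  Along one coordinate the logit map is
   the mean of an indicator under a Gibbs measure with affine exponents, so its
   second derivative is a combination of Gibbs means and covariances and is
   bounded by a constant depending only on the payoffs.  Hence the difference
   vanishes uniformly on the whole state space.  The equivalence with the
   homogeneous dynamics is the chain rule: d tau/dt = 1/(lambda+t+1). *)

Section RealDerivatives.
Context {R : realType}.
Implicit Types (f g : R -> R) (x a b : R).

Lemma is_derive1_ext {f g x a b} :
  f =1 g -> a = b -> is_derive x 1 f a -> is_derive x 1 g b.
Proof. by move=> /funext -> ->. Qed.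

Lemma is_derive1_affine a b x : is_derive x 1 (fun y => a + b * y) b.
Proof.
have := is_deriveD (is_derive_cst a x 1) (is_deriveZ b (is_derive_id x 1)).
by apply: is_derive1_ext => [y //|]; rewrite /GRing.scale /= add0r mulr1.
Qed.

Lemma is_derive1_mul {f g x a b} : is_derive x 1 f a -> is_derive x 1 g b ->
  is_derive x 1 (fun y => f y * g y) (a * g x + f x * b).
Proof.
move=> Df Dg; apply: is_derive1_ext (is_deriveM Df Dg) => //.
by rewrite /GRing.scale /= addrC mulrC [f x * _]mulrC.
Qed.

Lemma is_derive1_div {f g x a b} : g x != 0 ->
  is_derive x 1 f a -> is_derive x 1 g b ->
  is_derive x 1 (fun y => f y / g y) (a / g x - f x * b / g x ^+ 2).
Proof.
move=> gx0 Df Dg; have := is_derive1_mul Df (is_deriveV gx0 Dg).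
apply: is_derive1_ext => //.
rewrite /GRing.scale /=; field; exact: gx0.
Qed.

Lemma is_derive1_sum {N} {h : 'I_N -> R -> R} {x} {a : 'I_N -> R} :
  (forall j, is_derive x 1 (h j) (a j)) ->
  is_derive x 1 (fun y => \sum_(j < N) h j y) (\sum_(j < N) a j).
Proof.
by move=> D; apply: is_derive1_ext (is_derive_sum D) => // y; rewrite fct_sumE.
Qed.

Lemma is_derive1_expR_affine a b x :
  is_derive x 1 (fun y => expR (a + b * y)) (b * expR (a + b * x)).
Proof.
have := is_derive1_comp (is_derive_expR _) (is_derive1_affine a b x).
by apply: is_derive1_ext => //; rewrite mulrC.
Qed.

Lemma derive1n2_eq {f} {f' : R -> R} {x b} :
  (forall y : R, is_derive y 1 f (f' y)) -> is_derive x 1 f' b -> derive1n 2 f x = b.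
Proof.
move=> Df Df'; rewrite /derive1n /=.
have -> : derive1 f = f' by apply/funext => y; rewrite derive1E derive_val.
by rewrite derive1E derive_val.
Qed.

Lemma is_derive1_derive1 {f : R -> R^o} {x} :
  derivable f x 1 -> is_derive x 1 (f : R -> R) (derive1 f x).
Proof. by move=> Df; rewrite derive1E; apply: derivableP. Qed.

Lemma is_derive1_derivable {f : R -> R^o} {x a} :
  is_derive x 1 (f : R -> R) a -> derivable f x 1 /\ derive1 f x = a.
Proof. by move=> Df; split; [exact: ex_derive | rewrite derive1E derive_val]. Qed.

End RealDerivatives.

Section GibbsMean.
Context {R : realType} {N : nat} (a c : 'I_N -> R).
Hypothesis N_gt0 : (0 < N)%N.
Implicit Types (g : 'I_N -> R) (y : R).

Definition gibbs_weight j y := expR (a j + c j * y).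
Definition gibbs_sum g y := \sum_(j < N) gibbs_weight j y * g j.
Definition gibbs_mean g y := gibbs_sum g y / gibbs_sum (fun=> 1) y.
Definition gibbs_cov g y :=
  gibbs_mean (fun j => g j * c j) y - gibbs_mean g y * gibbs_mean c y.

Lemma gibbs_partition_gt0 y : 0 < gibbs_sum (fun=> 1) y.
Proof.
rewrite /gibbs_sum (bigD1 (Ordinal N_gt0)) //= mulr1 ltr_pwDl ?expR_gt0 //.
by apply: sumr_ge0 => j _; rewrite mulr1 expR_ge0.
Qed.

Lemma is_derive_gibbs_sum g y :
  is_derive y 1 (gibbs_sum g) (gibbs_sum (fun j => g j * c j) y).
Proof.
have := is_derive1_sum (fun j =>
  is_derive1_mul (is_derive1_expR_affine (a j) (c j) y) (is_derive_cst (g j) y 1)).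
apply: is_derive1_ext => [z //|].
by apply: eq_bigr => j _; rewrite /gibbs_weight /=; ring.
Qed.

Lemma is_derive_gibbs_mean g y : is_derive y 1 (gibbs_mean g) (gibbs_cov g y).
Proof.
have Z0 := gibbs_partition_gt0 y.
have := is_derive1_div (lt0r_neq0 Z0) (is_derive_gibbs_sum g y)
  (is_derive_gibbs_sum (fun=> 1) y).
apply: is_derive1_ext => [z //|].
have -> : gibbs_sum (fun j => 1 * c j) y = gibbs_sum c y.
  by apply: eq_bigr => j _; rewrite mul1r.
by rewrite /gibbs_cov /gibbs_mean; field; rewrite lt0r_neq0.
Qed.

Lemma derive1n2_gibbs_mean g y :
  derive1n 2 (gibbs_mean g) y = gibbs_cov (fun j => g j * c j) y
    - gibbs_cov g y * gibbs_mean c y - gibbs_mean g y * gibbs_cov c y.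
Proof.
apply: (derive1n2_eq (is_derive_gibbs_mean g)).
have := is_deriveB (is_derive_gibbs_mean (fun j => g j * c j) y)
  (is_derive1_mul (is_derive_gibbs_mean g y) (is_derive_gibbs_mean c y)).
by apply: is_derive1_ext => [z //|]; ring.
Qed.

Lemma gibbs_mean_norm_le g (G : R) y :
  (forall j, `|g j| <= G) -> `|gibbs_mean g y| <= G.
Proof.
move=> gG; have Z0 := gibbs_partition_gt0 y.
rewrite /gibbs_mean normrM normfV (gtr0_norm Z0) ler_pdivrMr //.
apply: (le_trans (ler_norm_sum _ _ _)).
rewrite /gibbs_sum mulr_sumr; apply: ler_sum => j _.
by rewrite normrM (gtr0_norm (expR_gt0 _)) mulr1 mulrC ler_wpM2r ?expR_ge0.
Qed.

Lemma gibbs_cov_norm_le g (G M : R) y : (forall j, `|g j| <= G) ->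
  (forall j, `|c j| <= M) -> `|gibbs_cov g y| <= 2 * G * M.
Proof.
move=> gG cM.
have gcGM j : `|g j * c j| <= G * M by rewrite normrM ler_pM.
have mgc := gibbs_mean_norm_le _ _ y gcGM.
have mgmc : `|gibbs_mean g y * gibbs_mean c y| <= G * M.
  by rewrite normrM ler_pM ?gibbs_mean_norm_le.
apply: (le_trans (ler_normB _ _)); lra.
Qed.

Lemma norm_derive1n2_gibbs_mean_le g (G M : R) y : (forall j, `|g j| <= G) ->
  (forall j, `|c j| <= M) -> `|derive1n 2 (gibbs_mean g) y| <= 6 * G * M ^+ 2.
Proof.
move=> gG cM.
have gcGM j : `|g j * c j| <= G * M by rewrite normrM ler_pM.
have h1 := gibbs_cov_norm_le _ _ _ y gcGM cM.
have h2 : `|gibbs_cov g y * gibbs_mean c y| <= 2 * G * M * M.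
  by rewrite normrM ler_pM ?gibbs_cov_norm_le ?gibbs_mean_norm_le.
have h3 : `|gibbs_mean g y * gibbs_cov c y| <= G * (2 * M * M).
  by rewrite normrM ler_pM ?gibbs_cov_norm_le ?gibbs_mean_norm_le.
rewrite derive1n2_gibbs_mean; apply: (le_trans (ler_normB _ _)).
have := ler_normB (gibbs_cov (fun j => g j * c j) y)
  (gibbs_cov g y * gibbs_mean c y).
rewrite expr2; lra.
Qed.

End GibbsMean.

Section LogitCurvature.
Context {R : realType} {n : nat} {m : 'I_n -> nat}.
Variables (adj : rel 'I_n) (A : forall i j : 'I_n, 'M[R]_(m i, m j)) (beta : R).

Definition coord_state (k : pcoord m) : pstate R m := upd (fun=> 0) k 1.

Definition logit_slope i k (s : 'I_(m i)) : R := util adj A beta (coord_state k) i s.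

Lemma util_upd x k y i s : util adj A beta (upd x k y) i s =
  util adj A beta x i s + (y - x k) * logit_slope i k s.
Proof.
have -> : upd x k y = (fun z => x z + (y - x k) * coord_state k z).
  by apply/funext => z; rewrite /coord_state /upd; case: eqP => [->|_]; ring.
rewrite /logit_slope /util /payoff_ij mulrCA -mulrDr; congr (_ * _).
rewrite mulr_sumr -big_split; apply: eq_bigr => j _.
by rewrite mulr_sumr -big_split; apply: eq_bigr => s' _ /=; ring.
Qed.

Lemma logit_upd_gibbs_mean x i s k :
  (fun y => logit adj A beta (upd x k y) i s) =
  gibbs_mean (fun s' => util adj A beta x i s' - x k * logit_slope i k s')
    (logit_slope i k) (fun s' => (s' == s)%:R).
Proof.
apply/funext => y; rewrite /logit /gibbs_mean /gibbs_sum /gibbs_weight.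
have uE s' : util adj A beta (upd x k y) i s' =
    util adj A beta x i s' - x k * logit_slope i k s' + logit_slope i k s' * y.
  by rewrite util_upd; ring.
congr (_ / _); last by apply: eq_bigr => s' _; rewrite mulr1 uE.
rewrite (bigD1 s) //= eqxx mulr1 big1 ?addr0 ?uE // => s' /negbTE ->.
by rewrite mulr0.
Qed.

Definition logit_curvature_bound i k : R :=
  6 * (\sum_(s' < m i) `|logit_slope i k s'|) ^+ 2.

Lemma logit_curvature_bound_ge0 i k : 0 <= logit_curvature_bound i k.
Proof. by rewrite mulr_ge0 ?sqr_ge0. Qed.

Lemma norm_d2logit_le x i s k :
  `|d2logit adj A beta x i s k| <= logit_curvature_bound i k.
Proof.
rewrite /d2logit logit_upd_gibbs_mean /logit_curvature_bound -[6]mulr1.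
apply: (norm_derive1n2_gibbs_mean_le _ _ (leq_ltn_trans (leq0n s) (ltn_ord s))).
- by move=> s'; case: eqP; rewrite ?normr1 ?normr0.
- move=> s'; rewrite (bigD1 s') //= lerDl.
  by apply: sumr_ge0 => ? _; exact: normr_ge0.
Qed.

End LogitCurvature.

Lemma asymptotically_autonomous_of_bound {R : realType} {T : finType}
    (F : R -> (T -> R^o) -> (T -> R^o)) (g : (T -> R^o) -> (T -> R^o))
    (r : R -> R) :
  r t @[t --> +oo] --> 0 -> (forall t x k, `|F t x k - g x k| <= r t) ->
  asymptotically_autonomous F g.
Proof.
move=> r0 Fg C _ e e0; have [M [_ rM]] := cvgr0_norm_lt r r0 e e0.
exists M => t Mt x _ k; apply: le_lt_trans (Fg t x k) _.
exact: le_lt_trans (ler_norm _) (rM t Mt).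
Qed.

Section SolutionReparametrization.
Context {R : realType} {T : finType}.
Implicit Types (F G : R -> (T -> R^o) -> (T -> R^o)) (u v : R -> T -> R^o).

Lemma solves_on_comp F G (D D' : set R) u (phi dphi : R -> R) :
  (forall t, D' t -> D (phi t)) ->
  (forall t, D' t -> is_derive t 1 phi (dphi t)) ->
  (forall t x k, D' t -> G t x k = dphi t * F (phi t) x k) ->
  solves_on F D u -> solves_on G D' (fun t => u (phi t)).
Proof.
move=> phiD dphiP GF solu t D't k; have [du uF] := solu _ (phiD t D't) k.
have [dv ->] := is_derive1_derivable
  (is_derive1_comp (is_derive1_derive1 du) (dphiP t D't)).
by split => //; rewrite uF GF // mulrC.
Qed.

Lemma solves_on_near_eq F (D : set R) u v :
  (forall t, D t -> \forall r \near t, u r = v r) ->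
  solves_on F D u -> solves_on F D v.
Proof.
move=> uv solu t Dt k; have [du uF] := solu t Dt k.
have uvk : \forall r \near t, u r k = v r k by apply: filterS (uv t Dt) => r ->.
have [dv ->] :=
  is_derive1_derivable (near_eq_is_derive uvk (is_derive1_derive1 du)).
by split => //; rewrite uF (nbhs_singleton (uv t Dt)).
Qed.

End SolutionReparametrization.

Section TimeChange.
Context {R : realType} (lambda : R).
Hypothesis lambda1_gt0 : 0 < lambda + 1.

Lemma t_of_tau_shift tau :
  lambda + t_of_tau lambda tau + 1 = (lambda + 1) * expR tau.
Proof. by rewrite /t_of_tau; ring. Qed.

Lemma t_of_tauK : cancel (t_of_tau lambda) (tau_of_t lambda).
Proof.
by move=> tau; rewrite /tau_of_t t_of_tau_shift mulrAC divff ?mul1r ?expRK // gt_eqF.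
Qed.

Lemma tau_of_tK t : 0 < lambda + t + 1 -> t_of_tau lambda (tau_of_t lambda t) = t.
Proof.
move=> t1; rewrite /t_of_tau /tau_of_t lnK ?posrE ?divr_gt0 //.
by rewrite mulrC divfK ?gt_eqF //; ring.
Qed.

Lemma tau_of_t_gt0 t : 0 < t -> 0 < tau_of_t lambda t.
Proof. by move=> t0; rewrite ln_gt0 // ltr_pdivlMr // mul1r; lra. Qed.

Lemma t_of_tau_gt0 tau : 0 < tau -> 0 < t_of_tau lambda tau.
Proof.
move=> tau0; have : lambda + 1 < (lambda + 1) * expR tau.
  by rewrite ltr_pMr // expR_gt1.
by rewrite -t_of_tau_shift; lra.
Qed.

Lemma is_derive_tau_of_t t : 0 < lambda + t + 1 ->
  is_derive t 1 (tau_of_t lambda) (lambda + t + 1)^-1.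
Proof.
move=> t1.
have dq : is_derive t 1 (fun r => (lambda + r + 1) / (lambda + 1)) (lambda + 1)^-1.
  have := is_derive1_affine ((lambda + 1) / (lambda + 1)) (lambda + 1)^-1 t.
  by apply: is_derive1_ext => // r; field; exact: lt0r_neq0.
have := @is_derive1_comp _ (@ln R) (fun r => (lambda + r + 1) / (lambda + 1)) t _ _
  (is_derive1_ln (divr_gt0 t1 lambda1_gt0)) dq.
by apply: is_derive1_ext => //; field; rewrite !lt0r_neq0.
Qed.

Lemma is_derive_t_of_tau (tau : R) :
  is_derive tau 1 (t_of_tau lambda) ((lambda + 1) * expR tau).
Proof.
have := is_derive1_comp (is_derive1_affine (- lambda - 1) (lambda + 1) (expR tau))
  (is_derive_expR tau).
by apply: is_derive1_ext => [r|]; rewrite /t_of_tau /=; ring.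
Qed.

End TimeChange.

Section MeanBeliefDynamics.
Context {R : realType} {n : nat} {m : 'I_n -> nat}.
Variables (adj : rel 'I_n) (A : forall i j : 'I_n, 'M[R]_(m i, m j)).
Variables (beta lambda : R) (sigma2 : pcoord m -> R).
Hypothesis lambda1_gt0 : 0 < lambda + 1.
Hypothesis sigma2_ge0 : forall k, 0 <= sigma2 k.

Definition variance_correction (x : pstate R m) (k : pcoord m) : R :=
  let: existT i s := k in
  \sum_(j < n | adj i j) \sum_(s' < m j)
    d2logit adj A beta x i s (ck j s') * sigma2 (ck j s').

Definition variance_correction_bound : R :=
  \sum_(i < n) \sum_(j < n | adj i j) \sum_(s' < m j)
    logit_curvature_bound adj A beta i (ck j s') * sigma2 (ck j s').

Lemma het_rhs_tau_sub_limit tau x k :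
  het_rhs_tau adj A beta lambda sigma2 tau x k - limit_rhs adj A beta x k =
  expR (- tau) ^+ 2 / 2 * variance_correction x k.
Proof.
case: k => i s.
rewrite /het_rhs_tau /het_rhs /limit_rhs /Defs.variance /= t_of_tau_shift.
have -> : (lambda + 1) / ((lambda + 1) * expR tau) = expR (- tau).
  by rewrite expRN invfM mulrA divff ?mul1r // gt_eqF.
have -> : \sum_(j < n | adj i j) \sum_(s' < m j)
    d2logit adj A beta x i s (ck j s') * (expR (- tau) ^+ 2 * sigma2 (ck j s')) =
    expR (- tau) ^+ 2 * \sum_(j < n | adj i j) \sum_(s' < m j)
      d2logit adj A beta x i s (ck j s') * sigma2 (ck j s').
  rewrite mulr_sumr; apply: eq_bigr => j _.
  by rewrite mulr_sumr; apply: eq_bigr => s' _; ring.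
by field; rewrite !lt0r_neq0 ?expR_gt0.
Qed.

Lemma norm_variance_correction_le x k :
  `|variance_correction x k| <= variance_correction_bound.
Proof.
case: k => i s; apply: (@le_trans _ _ (\sum_(j < n | adj i j) \sum_(s' < m j)
    logit_curvature_bound adj A beta i (ck j s') * sigma2 (ck j s'))).
  apply: le_trans (ler_norm_sum _ _ _) _; apply: ler_sum => j _.
  apply: le_trans (ler_norm_sum _ _ _) _; apply: ler_sum => s' _.
  by rewrite normrM (ger0_norm (sigma2_ge0 _)) ler_wpM2r ?norm_d2logit_le.
rewrite /variance_correction_bound [leRHS](bigD1 i) //= lerDl.
apply: sumr_ge0 => i' _; apply: sumr_ge0 => j _; apply: sumr_ge0 => s' _.
by rewrite mulr_ge0 ?logit_curvature_bound_ge0.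
Qed.

Lemma het_rhs_tau_asymptotically_autonomous :
  asymptotically_autonomous
    (het_rhs_tau adj A beta lambda sigma2) (limit_rhs adj A beta).
Proof.
apply: (asymptotically_autonomous_of_bound _ _
  (fun t => expR (- t) ^+ 2 * variance_correction_bound)).
  rewrite -[0](mul0r variance_correction_bound) -[X in X * _](mul0r 0).
  by apply: cvgM; [apply: cvgM; exact: cvgr_expR | exact: cvg_cst].
move=> tau x k; rewrite het_rhs_tau_sub_limit.
have e0 : 0 <= expR (- tau) ^+ 2 by rewrite exprn_ge0 ?expR_ge0.
have VB := ler_wpM2l e0 (norm_variance_correction_le x k).
have V0 := mulr_ge0 e0 (normr_ge0 (variance_correction x k)).
rewrite normrM ger0_norm ?divr_ge0 //; lra.
Qed.

Lemma hom_rhsE t x k :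
  hom_rhs adj A beta lambda t x k = (lambda + t + 1)^-1 * limit_rhs adj A beta x k.
Proof. by case: k => i s; rewrite /hom_rhs /limit_rhs mulrC. Qed.

Lemma limit_rhsE tau x k : limit_rhs adj A beta x k =
  (lambda + 1) * expR tau * hom_rhs adj A beta lambda (t_of_tau lambda tau) x k.
Proof.
by rewrite hom_rhsE t_of_tau_shift mulrA mulfV ?mul1r // gt_eqF ?mulr_gt0 ?expR_gt0.
Qed.

Lemma solves_on_hom_tau_of_t (nu : R -> pstate R m) :
  solves_on (fun _ => limit_rhs adj A beta) `]0, +oo[ nu ->
  solves_on (hom_rhs adj A beta lambda) `]0, +oo[
    (fun t => nu (tau_of_t lambda t)).
Proof.
apply: (solves_on_comp _ _ _ _ _ _ (fun t => (lambda + t + 1)^-1))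
  => [t|t|t x k]; rewrite /= in_itv /= andbT => t0.
- by rewrite in_itv /= andbT tau_of_t_gt0.
- by apply: is_derive_tau_of_t; rewrite // addrAC addr_gt0.
- by rewrite hom_rhsE.
Qed.

Lemma solves_on_limit_t_of_tau (mu : R -> pstate R m) :
  solves_on (hom_rhs adj A beta lambda) `]0, +oo[ mu ->
  solves_on (fun _ => limit_rhs adj A beta) `]0, +oo[
    (fun tau => mu (t_of_tau lambda tau)).
Proof.
apply: (solves_on_comp _ _ _ _ _ _ (fun tau => (lambda + 1) * expR tau))
  => [tau|tau|tau x k]; rewrite /= in_itv /= andbT => tau0.
- by rewrite in_itv /= andbT t_of_tau_gt0.
- exact: is_derive_t_of_tau.
- exact: limit_rhsE.
Qed.

Lemma solves_on_limit_iff_hom (nu : R -> pstate R m) :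
  solves_on (fun _ => limit_rhs adj A beta) `]0, +oo[ nu <->
  solves_on (hom_rhs adj A beta lambda) `]0, +oo[
    (fun t => nu (tau_of_t lambda t)).
Proof.
split; first exact: solves_on_hom_tau_of_t.
move=> /solves_on_limit_t_of_tau solnu.
have -> : nu = (fun tau => nu (tau_of_t lambda (t_of_tau lambda tau))).
  by apply/funext => tau; rewrite t_of_tauK.
exact: solnu.
Qed.

Lemma solves_on_hom_iff_limit (mu : R -> pstate R m) :
  solves_on (hom_rhs adj A beta lambda) `]0, +oo[ mu <->
  solves_on (fun _ => limit_rhs adj A beta) `]0, +oo[
    (fun tau => mu (t_of_tau lambda tau)).
Proof.
split; first exact: solves_on_limit_t_of_tau.
move=> /solves_on_hom_tau_of_t; apply: solves_on_near_eq => t.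
rewrite /= in_itv /= andbT => t0.
have {}t0 : - lambda - 1 < t by apply: lt_trans t0; rewrite -opprD oppr_lt0.
by apply: filterS (lt_nbhsr t0) => r r_gt; rewrite tau_of_tK //; lra.
Qed.

End MeanBeliefDynamics.

Theorem lemma1 (R : realType) (n : nat) (m : 'I_n -> nat)
    (adj : rel 'I_n) (adj_sym : symmetric adj) (adj_irr : irreflexive adj)
    (A : forall i j : 'I_n, 'M[R]_(m i, m j))
    (beta lambda : R) (sigma2 : pcoord m -> R)
    (hbeta : 0 < beta) (hlambda : 0 <= lambda)
    (hsigma : forall k, 0 <= sigma2 k) :
  (* (1) the reparametrized heterogeneous mean dynamics are asymptotically
     autonomous with limit equation d mu/d tau = f(mu) - mu *)
  asymptotically_autonomous
    (het_rhs_tau adj A beta lambda sigma2) (limit_rhs adj A beta)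
  /\
  (* (2) the limit equation is equivalent, via tau = ln((lambda+t+1)/(lambda+1)),
     to the homogeneous belief dynamics d mu/dt = (f(mu) - mu)/(lambda+t+1) *)
  (forall nu : R -> pstate R m,
     solves_on (fun _ => limit_rhs adj A beta) `]0, +oo[ nu <->
     solves_on (hom_rhs adj A beta lambda) `]0, +oo[
       (fun t => nu (tau_of_t lambda t)))
  /\
  (forall mu : R -> pstate R m,
     solves_on (hom_rhs adj A beta lambda) `]0, +oo[ mu <->
     solves_on (fun _ => limit_rhs adj A beta) `]0, +oo[
       (fun tau => mu (t_of_tau lambda tau))).
Proof.
have lambda1_gt0 : 0 < lambda + 1 by lra.
split; first exact: het_rhs_tau_asymptotically_autonomous.
split=> u; [exact: solves_on_limit_iff_hom | exact: solves_on_hom_iff_limit].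
Qed.
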